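(* Let $G=(V,E)$ be a connected comparability graph. Then the acyclic orientations of $E$ whose induced posets have the maximum number of linear extensions (among all acyclic orientations of $E$) are exactly the transitive orientations of $G$.
   Context: A comparability graph is a simple undirected graph $G=(V,E)$ for which there is a partial order on $V$ under which two distinct vertices $u,v$ are comparable if and only if $\{u,v\}\in E$. An acyclic orientation of $E$ induces a partial order on $V$ in which $u<v$ if and only if there is a directed path from $u$ to $v$. An acyclic orientation $O$ of $E$ is a transitive orientation of $G$ if the comparability graph of the poset induced by $O$ equals $G$ (i.e. two distinct vertices are comparable in the induced poset iff they are adjacent in $G$). A linear extension of a partial order $P$ on an $n$-element set $V$ is a bijection $\sigma:V\to[n]$ such that $u<_P v$ implies $\sigma(u)<\sigma(v)$. *)

From mathcomp Require Import all_boot.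
Set Implicit Arguments. Unset Strict Implicit. Unset Printing Implicit Defensive.

Section Defs.
Variable V : finType.

Definition simple_graph (e : rel V) : Prop :=
  symmetric e /\ irreflexive e.

Definition connected (e : rel V) : Prop := forall u v, connect e u v.

Definition strict_porder (lt : rel V) : Prop :=
  irreflexive lt /\ transitive lt.

Definition comparability_of (lt : rel V) (e : rel V) : Prop :=
  forall u v, u != v -> (lt u v || lt v u) = e u v.

Definition comparability_graph (e : rel V) : Prop :=
  exists lt : rel V, strict_porder lt /\ comparability_of lt e.

Definition orientation (e : rel V) (O : rel V) : Prop :=
  (forall u v, O u v -> e u v) /\ (forall u v, e u v -> O u v != O v u).

Definition acyclic (O : rel V) : Prop :=
  forall u v, O u v -> ~~ connect O v u.

Definition acyclic_orientation (e O : rel V) : Prop :=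
  orientation e O /\ acyclic O.

Definition induced_lt (O : rel V) : rel V :=
  fun u v => (u != v) && connect O u v.

Definition transitive_orientation (e O : rel V) : Prop :=
  acyclic_orientation e O /\ comparability_of (induced_lt O) e.

Definition is_linext (lt : rel V) (s : {ffun V -> 'I_#|V|}) : bool :=
  injectiveb s && [forall u, forall v, lt u v ==> (s u < s v)].

Definition num_linext (lt : rel V) : nat := #|[pred s | is_linext lt s]|.

End Defs.

(* Count linear extensions by the element placed last: e(P) is the sum of
   e(P - m) over the maximal elements m of P.  For a poset T and an antichain S,
   the sum of e(T - v) over v in S is at most e(T): placing a maximal m last
   turns S into an antichain of T - m, and induction applies.  If X is an
   acyclic orientation of the comparability graph of T, the X-maximal elements
   form a T-antichain, so e(X) <= e(T).  An induced path a -> b -> c of X makes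
   this strict: removing X-maximal elements other than c keeps the path, and
   once c is the only one, e(X) <= e(T - c) < e(T - c) + e(T - a) <= e(T).
   Transitive orientations are posets with comparability graph G, so they all
   attain the maximum; a non-transitive acyclic orientation has a directed path
   between non-adjacent vertices, hence an induced path a -> b -> c. *)

From mathcomp Require Import all_boot zify.
Set Implicit Arguments. Unset Strict Implicit. Unset Printing Implicit Defensive.

Section LinearExtensionCount.
Variable V : finType.
Implicit Types (A S : {set V}) (R : rel V).

Lemma setD1_ind (P : {set V} -> Prop) :
  P set0 -> (forall A, A != set0 -> (forall v, v \in A -> P (A :\ v)) -> P A) ->
  forall A, P A.
Proof.
move=> P0 PD A; move: {2}#|A| (leqnn #|A|) => n; elim: n A => [|n IH] A leAn.
  by move: leAn; rewrite leqn0 cards_eq0 => /eqP->.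
have [->//|nzA] := eqVneq A set0; apply: PD nzA _ => v vA; apply: IH.
by rewrite (cardsD1 v) vA add1n ltnS in leAn.
Qed.

Lemma sum_setU (A B : {set V}) (F : V -> nat) : {in A, forall x, x \notin B} ->
  \sum_(x in A :|: B) F x = \sum_(x in A) F x + \sum_(x in B) F x.
Proof.
move=> AnB; rewrite -bigU; first by apply: eq_bigl => x; rewrite !inE.
by rewrite disjoint_subset; apply/subsetP => x /AnB.
Qed.

Definition maximals R A := [set v in A | [forall u in A, ~~ R v u]].

(* Linear extensions of [R] on [A], counted by the element placed last. *)
Fixpoint nlinext_rec R n A : nat :=
  if n is n'.+1 then \sum_(v in maximals R A) nlinext_rec R n' (A :\ v) else 1.
Definition nlinext R A := nlinext_rec R #|A| A.

Lemma nlinext0 R : nlinext R set0 = 1.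
Proof. by rewrite /nlinext cards0. Qed.

Lemma maximalsP R A v :
  reflect (v \in A /\ forall u, u \in A -> ~~ R v u) (v \in maximals R A).
Proof. by rewrite inE; apply: (iffP andP) => -[vA /forall_inP]. Qed.

Lemma maximals_sub R A : maximals R A \subset A.
Proof. by apply/subsetP => v /maximalsP[]. Qed.

Lemma nlinextE R A : A != set0 ->
  nlinext R A = \sum_(v in maximals R A) nlinext R (A :\ v).
Proof.
rewrite -card_gt0 /nlinext; case cardA: #|A| => [|n] // _ /=.
apply: eq_bigr => v /maximalsP[vA _].
by rewrite (cardsD1 v) vA add1n in cardA; case: cardA => ->.
Qed.

Definition antichain R S := {in S &, forall u w, ~~ R u w}.

Section StrictOrder.
Variable T : rel V.
Hypotheses (Tirr : irreflexive T) (Ttr : transitive T).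

Lemma maximals_neq0 A : A != set0 -> maximals T A != set0.
Proof.
case/set0Pn=> a aA; pose below v := #|[set u in A | T u v]|.
have [v vA0 vmax] := @arg_maxnP _ a (mem A) below aA.
have vA : v \in A := vA0.
apply/set0Pn; exists v; apply/maximalsP; split=> // w wA; apply/negP => Tvw.
have sub : v |: [set u in A | T u v] \subset [set u in A | T u w].
  apply/subsetP => u; rewrite !inE => /predU1P[->|/andP[uA Tuv]].
    by rewrite vA.
  by rewrite uA (Ttr Tuv Tvw).
have := leq_trans (subset_leq_card sub) (vmax w wA).
by rewrite cardsU1 inE Tirr andbF ltnn.
Qed.

Lemma nlinext_gt0 A : 0 < nlinext T A.
Proof.
elim/setD1_ind: A => [|A nzA IH]; first by rewrite nlinext0.
have /set0Pn[v vmax] := maximals_neq0 nzA.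
rewrite nlinextE // (bigD1 v) //= ltn_addr // IH //.
exact: subsetP (maximals_sub _ _) _ vmax.
Qed.

(* The elements that become maximal when [m] is removed from [A]. *)
Definition released A m :=
  [set x in A | T x m & [forall u in A, T x u ==> (u == m)]].

Lemma releasedP A m x : reflect
  [/\ x \in A, T x m & forall u, u \in A -> T x u -> u = m] (x \in released A m).
Proof.
rewrite inE; apply: (iffP and3P) => [[xA Txm /forall_inP H]|[xA Txm H]].
  by split=> // u uA Txu; apply/eqP; move: (H u uA); rewrite Txu.
by split=> //; apply/forall_inP => u uA; apply/implyP => /(H u uA)->.
Qed.

Lemma maximalsD1 A v : v \in A ->
  maximals T (A :\ v) = (maximals T A :\ v) :|: released A v.
Proof.
move=> vA; apply/setP => m; rewrite in_setU in_setD1.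
apply/maximalsP/idP => [[/setD1P[mv mA] Hm]|].
  case Tmv: (T m v).
    apply/orP; right; apply/releasedP; split=> // u uA Tmu.
    by apply/eqP/negPn/negP => uv; move: (Hm u); rewrite in_setD1 uv uA Tmu => /(_ isT).
  apply/orP; left; apply/andP; split=> //; apply/maximalsP; split=> // u uA.
  by have [->|uv] := eqVneq u v; [rewrite Tmv | apply: Hm; rewrite in_setD1 uv].
case/orP => [/andP[mv /maximalsP[mA Hm]]|/releasedP[mA Tmv Hm]].
  by split=> [|u /setD1P[_ /Hm]//]; rewrite in_setD1 mv.
have mv : m != v by apply: contraTneq Tmv => ->; rewrite Tirr.
split=> [|u /setD1P[uv uA]]; first by rewrite in_setD1 mv.
by apply/negP => /(Hm u uA) uE; rewrite uE eqxx in uv.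
Qed.

Lemma released_nonmax A v : v \in A -> v \notin maximals T A -> released A v = set0.
Proof.
move=> vA vnmax; apply/setP => x; rewrite in_set0; apply/negbTE/negP => /releasedP[xA Txv Hx].
case/negP: vnmax; apply/maximalsP; split=> // u uA; apply/negP => Tvu.
by move: (Tvu); rewrite (Hx u uA (Ttr Txv Tvu)) Tirr.
Qed.

Lemma nlinextD1E A v : v \in A -> A :\ v != set0 ->
  nlinext T (A :\ v) = \sum_(m in maximals T A :\ v) nlinext T (A :\ v :\ m)
                     + \sum_(m in released A v) nlinext T (A :\ v :\ m).
Proof.
move=> vA nzAv; rewrite nlinextE // maximalsD1 // sum_setU // => x.
case/setD1P=> _ /maximalsP[_ Hx]; apply/negP => /releasedP[_ Txv _].
by move: (Hx v vA); rewrite Txv.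
Qed.

Lemma setD1C A u v : A :\ u :\ v = A :\ v :\ u.
Proof. by apply/setP => x; rewrite !inE andbCA. Qed.

(* After [m] is placed last, the antichain [S] of [A] is traded for this antichain of [A :\ m]. *)
Definition next_antichain A S m :=
  (S :\ m) :|: (if m \in S then released A m else set0).

Lemma next_antichain_sub A S m : S \subset A -> next_antichain A S m \subset A :\ m.
Proof.
move=> sSA; apply/subsetP => x; rewrite inE => /orP[/setD1P[xm /(subsetP sSA) xA]|].
  by rewrite in_setD1 xm.
case: ifP => _; last by rewrite inE.
case/releasedP=> xA Txm _.
by rewrite in_setD1 xA andbT; apply: contraTneq Txm => ->; rewrite Tirr.
Qed.

Lemma next_antichain_antichain A S m : S \subset A -> antichain T S ->
  antichain T (next_antichain A S m).
Proof.
move=> sSA acS u w; rewrite /next_antichain.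
case: ifP => [mS|_]; last by rewrite setU0 => /setD1P[_ uS] /setD1P[_ wS]; apply: acS.
rewrite !in_setU; case/orP=> [/setD1P[_ uS]|/releasedP[uA Tum Hu]];
  case/orP=> [/setD1P[wm wS]|/releasedP[wA Twm Hw]]; apply/negP => Tuw.
- by move: Tuw; apply/negP/acS.
- by move: (acS u m uS mS); rewrite (Ttr Tuw Twm).
- by move: wm; rewrite (Hu w (subsetP sSA w wS) Tuw) eqxx.
- by move: Twm; rewrite (Hu w wA Tuw) Tirr.
Qed.

Lemma sum_nlinextD1 A S : S \subset A -> antichain T S -> 1 < #|A| ->
  \sum_(v in S) nlinext T (A :\ v) =
  \sum_(m in maximals T A) \sum_(w in next_antichain A S m) nlinext T (A :\ m :\ w).
Proof.
move=> sSA acS gt1A; pose F v m := nlinext T (A :\ v :\ m).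
have nzD1 v : v \in A -> A :\ v != set0.
  by move=> vA; rewrite -card_gt0; move: gt1A; rewrite (cardsD1 v) vA add1n.
rewrite (eq_bigr (fun v => \sum_(m in maximals T A :\ v) F v m
                         + \sum_(m in released A v) F v m)) ?big_split /=; last first.
  by move=> v /(subsetP sSA) vA; rewrite nlinextD1E ?nzD1.
have splitR m : \sum_(w in next_antichain A S m) F m w =
    \sum_(w in S :\ m) F m w + (if m \in S then \sum_(w in released A m) F m w else 0).
  rewrite /next_antichain; case: ifP => mS; last by rewrite setU0 addn0.
  rewrite sum_setU // => x /setD1P[_ xS]; apply/negP => /releasedP[_ Txm _].
  by move: (acS x m xS mS); rewrite Txm.
rewrite (eq_bigr _ (fun m _ => splitR m)) big_split /=; congr (_ + _).
  transitivity (\sum_(v in S) \sum_(m in maximals T A) (if m != v then F v m else 0)).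
    by apply: eq_bigr => v _; rewrite -big_mkcondr; apply: eq_bigl => m; rewrite in_setD1 andbC.
  rewrite exchange_big; apply: eq_bigr => m _; rewrite -big_mkcondr.
  by apply: eq_big => [w|w _]; [rewrite in_setD1 andbC eq_sym | rewrite /F setD1C].
rewrite -big_mkcondr (eq_bigr (fun v => if v \in maximals T A
    then \sum_(m in released A v) F v m else 0)); last first.
  move=> v vS; case: ifP => // vnmax.
  by rewrite released_nonmax ?vnmax ?(subsetP sSA) // big_set0.
by rewrite -big_mkcondr; apply: eq_bigl => v; rewrite andbC.
Qed.

Lemma antichain_sum_nlinextD1 A S : S \subset A -> antichain T S ->
  \sum_(v in S) nlinext T (A :\ v) <= nlinext T A.
Proof.
elim/setD1_ind: A S => [|A nzA IH] S sSA acS.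
  by rewrite (_ : S = set0) ?big_set0 //; apply/eqP; rewrite -subset0.
have [le1A|gt1A] := leqP #|A| 1.
  rewrite (eq_bigr (fun _ => 1)) ?sum1_card; last first.
    move=> v /(subsetP sSA) vA; rewrite (_ : A :\ v = set0) ?nlinext0 //.
    by apply/eqP; rewrite -cards_eq0; move: le1A; rewrite (cardsD1 v) vA; lia.
  exact: leq_trans (subset_leq_card sSA) (leq_trans le1A (nlinext_gt0 A)).
rewrite sum_nlinextD1 // [nlinext T A]nlinextE //; apply: leq_sum => m mmax.
have mA : m \in A := subsetP (maximals_sub T A) m mmax.
by apply: IH; [|apply: next_antichain_sub|apply: next_antichain_antichain].
Qed.

Lemma nlinextD1_lt A a c : a \in A -> c \in A -> a != c -> ~~ T a c -> ~~ T c a ->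
  nlinext T (A :\ c) < nlinext T A.
Proof.
move=> aA cA ac nTac nTca; have acA : [set a; c] \subset A.
  by apply/subsetP => x /set2P[]->.
have acS : antichain T [set a; c].
  by move=> u w /set2P[]-> /set2P[]->; rewrite ?Tirr.
have := antichain_sum_nlinextD1 acA acS.
rewrite big_setU1 ?inE //= big_set1; apply: leq_trans.
by rewrite -addn1 addnC leq_add2r nlinext_gt0.
Qed.
End StrictOrder.

Lemma nlinext_le_single_max R A c : {subset maximals R A <= pred1 c} ->
  nlinext R A <= nlinext R (A :\ c).
Proof.
move=> maxc; have [->|nzA] := eqVneq A set0; first by rewrite set0D.
rewrite nlinextE //; apply: leq_trans (_ : \sum_(v in [set c]) nlinext R (A :\ v) <= _).
  by apply: sub_le_big => [//|m n|v /maxc/eqP->]; [exact: leq_addr|exact: set11].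
by rewrite big_set1.
Qed.

Section OrientationVsOrder.
Variables (e X T : rel V).
Hypothesis Xtotal : forall u v, e u v -> X u v || X v u.
Hypotheses (Tirr : irreflexive T) (Ttr : transitive T) (Te : subrel T e).

Lemma maximals_antichain A : antichain T (maximals X A).
Proof.
move=> u w /maximalsP[uA Hu] /maximalsP[wA Hw]; apply/negP => /Te /Xtotal.
by rewrite (negbTE (Hu w wA)) (negbTE (Hw u uA)).
Qed.

Lemma nlinext_le_order A : nlinext X A <= nlinext T A.
Proof.
elim/setD1_ind: A => [|A nzA IH]; first by rewrite !nlinext0.
rewrite nlinextE //; apply: leq_trans (antichain_sum_nlinextD1 Tirr Ttr
  (maximals_sub X A) (@maximals_antichain A)).
by apply: leq_sum => v /maximalsP[vA _]; apply: IH.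
Qed.

Lemma nlinext_lt_order A a b c : symmetric e -> (forall u v, X u v -> ~~ X v u) ->
  a \in A -> b \in A -> c \in A -> X a b -> X b c -> ~~ e a c ->
  nlinext X A < nlinext T A.
Proof.
move=> esym Xasym; elim/setD1_ind: A => [|A nzA IH] aA bA cA Xab Xbc nEac.
  by rewrite inE in aA.
have nmax x y : y \in A -> X x y -> x \notin maximals X A.
  by move=> yA Xxy; apply/negP => /maximalsP[_ /(_ y yA)]; rewrite Xxy.
have [v /andP[vmax vc]|maxc] := pickP [pred v in maximals X A | v != c].
  have vA : v \in A := subsetP (maximals_sub X A) v vmax.
  have va : v != a by apply: contraTneq vmax => ->; apply: nmax Xab.
  have vb : v != b by apply: contraTneq vmax => ->; apply: nmax Xbc.
  move/(_ v vA): IH; rewrite !in_setD1 aA bA cA ![_ == v]eq_sym va vb vc.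
  move=> /(_ isT isT isT Xab Xbc nEac) ltv; rewrite nlinextE //.
  apply: leq_trans (antichain_sum_nlinextD1 Tirr Ttr (maximals_sub X A) (@maximals_antichain A)).
  rewrite (bigD1 v vmax) [X in _ <= X](bigD1 v vmax) /= -addSn leq_add //.
  by apply: leq_sum => m /andP[/maximalsP[mA _] _]; apply: nlinext_le_order.
have ac : a != c by apply: contraTneq Xbc => <-; apply: Xasym.
apply: leq_ltn_trans (nlinext_le_single_max (c := c) _) _.
  by move=> v vmax; move: (maxc v); rewrite /= vmax /= => /negbFE.
apply: leq_ltn_trans (nlinext_le_order (A :\ c)) _.
by apply: nlinextD1_lt ac _ _ => //; apply: contra nEac => /Te //; rewrite esym.
Qed.
End OrientationVsOrder.

Lemma card_ord_lt n k : k <= n -> #|[set i : 'I_n | i < k]| = k.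
Proof.
move=> le_kn; have widen_inj : injective (widen_ord le_kn) by move=> i j [] /ord_inj.
rewrite -[RHS]card_ord -(card_imset _ widen_inj).
apply: eq_card => i; rewrite !inE; apply/idP/imsetP => [ltik|[j _ ->]]; last exact: (ltn_ord j).
by exists (Ordinal ltik) => //; apply: val_inj.
Qed.

Section FfunCount.
Variable R : rel V.
Implicit Type s : {ffun V -> 'I_#|V|}.

(* Values off [A] are pinned to [enum_rank], so that each ordering of [A] is
   counted once; for [A = setT] these are the linear extensions of [is_linext]. *)
Definition linext_on A s : bool :=
  [&& [forall x, (x \notin A) ==> (s x == enum_rank x)],
      [forall x in A, s x < #|A|],
      [forall x in A, forall y in A, (s x == s y) ==> (x == y)] &
      [forall x in A, forall y in A, R x y ==> (s x < s y)]].

Lemma linext_onP A s : reflect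
  [/\ forall x, x \notin A -> s x = enum_rank x,
      forall x, x \in A -> s x < #|A|,
      {in A &, injective s} &
      forall x y, x \in A -> y \in A -> R x y -> s x < s y] (linext_on A s).
Proof.
apply: (iffP and4P) => [[/forallP H1 /forall_inP H2 /forall_inP H3 /forall_inP H4]|].
  split=> // [x xA|x y xA yA sxy|x y xA yA Rxy].
  - by apply/eqP; move: (H1 x); rewrite xA.
  - by apply/eqP; move/forall_inP/(_ y yA): (H3 x xA); rewrite sxy eqxx.
  - by move/forall_inP/(_ y yA): (H4 x xA); rewrite Rxy.
case=> H1 H2 H3 H4; split.
- by apply/forallP => x; apply/implyP => /H1->.
- exact/forall_inP.
- by apply/forall_inP => x xA; apply/forall_inP => y yA; apply/implyP => /eqP/H3->.
- by apply/forall_inP => x xA; apply/forall_inP => y yA; apply/implyP => /H4; apply.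
Qed.

Definition nlinext_ffun A := #|[set s | linext_on A s]|.

Definition ffun_upd s v (k : 'I_#|V|) := [ffun x => if x == v then k else s x].

Lemma nlinext_ffun0 : nlinext_ffun set0 = 1.
Proof.
rewrite /nlinext_ffun (_ : [set s | linext_on set0 s] = [set [ffun x => enum_rank x]]).
  exact: cards1.
apply/setP => s; rewrite !inE; apply/linext_onP/eqP => [[H1 _ _ _]|->].
  by apply/ffunP => x; rewrite ffunE H1 ?inE.
by split=> [x _|x|x y|x y]; rewrite ?ffunE ?inE.
Qed.

Lemma linext_on_top A s : A != set0 -> linext_on A s ->
  exists2 w, w \in A & s w = #|A|.-1 :> nat.
Proof.
move=> nzA /linext_onP[_ lt_s inj_s _].
have [w /andP[wA /eqP swA]|none] := pickP [pred w in A | s w == #|A|.-1 :> nat].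
  by exists w.
have sub : s @: A \subset [set i : 'I_#|V| | i < #|A|.-1].
  apply/subsetP => _ /imsetP[x xA ->]; rewrite inE.
  by move: (none x) (lt_s x xA); rewrite /= xA /=; lia.
have := subset_leq_card sub; rewrite card_in_imset // card_ord_lt.
  by move: nzA; rewrite -card_gt0; lia.
by have := max_card A; lia.
Qed.

Lemma linext_on_top_maximal A s w : linext_on A s -> w \in A ->
  s w = #|A|.-1 :> nat -> w \in maximals R A.
Proof.
move=> /linext_onP[_ lt_s _ mono_s] wA swA; apply/maximalsP; split=> // y yA.
apply/negP => /(mono_s w y wA yA); move: (lt_s y yA); rewrite swA.
have : 0 < #|A| by apply/card_gt0P; exists w.
lia.
Qed.

Lemma sum_linext_on_top A s : A != set0 -> linext_on A s ->
  \sum_(v in maximals R A) (s v == #|A|.-1 :> nat) = 1.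
Proof.
move=> nzA sA; have [w wA swA] := linext_on_top nzA sA.
rewrite (bigD1 w) ?(linext_on_top_maximal sA) //= swA eqxx big1 // => v /andP[vmax vw].
have vA : v \in A := subsetP (maximals_sub R A) v vmax.
apply/eqP; rewrite eqb0; apply: contra vw => /eqP svA; case/linext_onP: sA => _ _ inj_s _.
by apply/eqP/inj_s => //; apply: val_inj; rewrite /= svA swA.
Qed.

Lemma linext_onD1 A s v : linext_on A s -> v \in A -> s v = #|A|.-1 :> nat ->
  linext_on (A :\ v) (ffun_upd s v (enum_rank v)).
Proof.
move=> /linext_onP[H1 H2 H3 H4] vA svA; have cardA := cardsD1 v A; rewrite vA in cardA.
apply/linext_onP; split=> [x|x /setD1P[xv xA]|x y /setD1P[xv xA] /setD1P[yv yA]|x y].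
- by rewrite !ffunE in_setD1 negb_and negbK; case: eqP => [->//|_ /= /H1].
- rewrite ffunE (negbTE xv); have sxA : s x != s v by apply: contra xv => /eqP/H3->.
  by move: (H2 x xA) sxA; rewrite -(inj_eq val_inj) /= svA; lia.
- by rewrite !ffunE (negbTE xv) (negbTE yv); apply: H3.
- by rewrite !in_setD1 !ffunE => /andP[/negbTE-> xA] /andP[/negbTE-> yA]; apply: H4.
Qed.

Lemma linext_onU1 A s v (k : 'I_#|V|) : v \in maximals R A -> k = #|A|.-1 :> nat ->
  linext_on (A :\ v) s -> linext_on A (ffun_upd s v k).
Proof.
move=> /maximalsP[vA vmax] kA /linext_onP[H1 H2 H3 H4].
have cardA := cardsD1 v A; rewrite vA in cardA.
have ltA x : x \in A -> x != v -> s x < #|A|.-1.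
  by move=> xA xv; move: (H2 x); rewrite in_setD1 xv xA cardA /=; apply.
apply/linext_onP; split=> [x xA|x xA|x y xA yA|x y xA yA Rxy]; rewrite !ffunE.
- by case: eqP => [xv|_]; [rewrite xv vA in xA | rewrite H1 // in_setD1 (negbTE xA) andbF].
- by case: eqP => [_|/eqP xv]; [rewrite kA cardA | move: (ltA x xA xv); rewrite cardA]; lia.
- case: eqP => [->|/eqP xv]; case: eqP => [->|/eqP yv] //.
  + by move=> skv; move: (ltA y yA yv); rewrite -skv kA ltnn.
  + by move=> skv; move: (ltA x xA xv); rewrite skv kA ltnn.
  + by apply: H3; rewrite in_setD1 ?xv ?yv.
- case: eqP => [xv|/eqP xv]; first by move: (vmax y yA); rewrite -xv Rxy.
  case: eqP => [_|/eqP yv]; first by rewrite kA; apply: ltA.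
  by apply: H4; rewrite // in_setD1 ?xv ?yv.
Qed.

Lemma card_linext_on_top A v : v \in maximals R A ->
  #|[set s | linext_on A s & s v == #|A|.-1 :> nat]| = nlinext_ffun (A :\ v).
Proof.
move=> vmax; have vA : v \in A := subsetP (maximals_sub R A) v vmax.
have ltAV : #|A|.-1 < #|V|.
  have : 0 < #|A| by apply/card_gt0P; exists v.
  by have := max_card A; lia.
pose k := Ordinal ltAV; rewrite /nlinext_ffun.
have -> : [set s | linext_on (A :\ v) s] =
    (fun s => ffun_upd s v (enum_rank v)) @: [set s | linext_on A s & s v == #|A|.-1 :> nat].
  apply/setP => s; rewrite inE; apply/idP/imsetP => [sAv|[t /setIdP[tA /eqP tvA] ->]].
    exists (ffun_upd s v k); first by rewrite inE linext_onU1 //= ffunE eqxx.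
    apply/ffunP => x; rewrite !ffunE; case: eqP => [->|//].
    by case/linext_onP: sAv => -> //; rewrite !inE eqxx.
  exact: linext_onD1.
rewrite card_in_imset // => s t /setIdP[_ /eqP svA] /setIdP[_ /eqP tvA] /ffunP st.
apply/ffunP => x; have [->|xv] := eqVneq x v; first by apply: val_inj; rewrite /= svA tvA.
by move: (st x); rewrite !ffunE (negbTE xv).
Qed.

Lemma nlinext_ffunE A : A != set0 ->
  nlinext_ffun A = \sum_(v in maximals R A) nlinext_ffun (A :\ v).
Proof.
move=> nzA; rewrite {1}/nlinext_ffun -sum1_card.
rewrite (eq_bigr (fun s => \sum_(v in maximals R A) (s v == #|A|.-1 :> nat))); last first.
  by move=> s; rewrite inE => /(sum_linext_on_top nzA).
rewrite exchange_big /=; apply: eq_bigr => v vmax.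
rewrite -card_linext_on_top // -big_mkcondr sum1_card.
by apply: eq_card => s; rewrite unfold_in /= !inE.
Qed.

Lemma nlinext_ffun_nlinext A : nlinext_ffun A = nlinext R A.
Proof.
elim/setD1_ind: A => [|A nzA IH]; first by rewrite nlinext_ffun0 nlinext0.
by rewrite nlinext_ffunE // nlinextE //; apply: eq_bigr => v /maximalsP[/IH].
Qed.
End FfunCount.
End LinearExtensionCount.

Section Orientations.
Variable V : finType.
Implicit Types (e O : rel V).

Lemma connect_transitive_rel (r : rel V) : transitive r ->
  forall x y, connect r x y -> (x == y) || r x y.
Proof.
move=> rtr x y /connectP[p]; elim: p x => [|z p IH] x /= => [_ ->|/andP[rxz pz] yE].
  by rewrite eqxx.
by case/orP: (IH z pz yE) => [/eqP<-|/(rtr _ _ _ rxz)->]; rewrite ?rxz orbT.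
Qed.

Lemma homo_connect_leq (r : rel V) (f : V -> nat) : {homo f : x y / r x y >-> x <= y} ->
  forall x y, connect r x y -> f x <= f y.
Proof.
move=> fr x y /connectP[p]; elim: p x => [|z p IH] x /= => [_ ->//|/andP[rxz pz] yE].
exact: leq_trans (fr _ _ rxz) (IH z pz yE).
Qed.

Lemma num_linext_nlinext (R : rel V) : irreflexive R ->
  num_linext (induced_lt R) = nlinext R setT.
Proof.
move=> Rirr; rewrite -nlinext_ffun_nlinext; apply: eq_card => s.
rewrite [RHS]inE unfold_in /=; apply/andP/linext_onP => [[/injectiveP inj_s /forallP mono_s]|].
  split=> [x|x _|x y _ _|x y _ _ Rxy]; rewrite ?inE ?cardsT ?ltn_ord //; first exact: inj_s.
  move/forallP/(_ y): (mono_s x); rewrite /induced_lt connect1 // andbT.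
  by have -> : x != y by apply: contraTneq Rxy => ->; rewrite Rirr.
case=> _ _ inj_s mono_s; split; first by apply/injectiveP => x y; apply: inj_s.
apply/forallP => u; apply/forallP => v; apply/implyP => /andP[uv conn_uv].
have le_uv : s u <= s v.
  apply: (homo_connect_leq (f := fun x => nat_of_ord (s x))) conn_uv => x y Rxy.
  by apply/ltnW/mono_s; rewrite ?inE.
by rewrite ltn_neqAle le_uv andbT; apply: contra uv => /eqP/val_inj/inj_s->; rewrite ?inE.
Qed.

Lemma orientation_total e O : orientation e O -> forall u v, e u v -> O u v || O v u.
Proof. by case=> _ Oone u v /Oone; case: (O u v); case: (O v u). Qed.

Lemma orientation_asym e O : orientation e O -> forall u v, O u v -> ~~ O v u.
Proof. by case=> Oe Oone u v Ouv; move: (Oone u v (Oe u v Ouv)); rewrite Ouv. Qed.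

Lemma orientation_irr e O : irreflexive e -> orientation e O -> irreflexive O.
Proof. by move=> eirr [Oe _] u; apply/negP => /Oe; rewrite eirr. Qed.

Lemma porder_acyclic_orientation e (lt : rel V) : irreflexive e ->
  strict_porder lt -> comparability_of lt e -> acyclic_orientation e lt.
Proof.
move=> eirr [ltirr lttr] lt_e.
have lt_neq u v : lt u v -> u != v by apply: contraTneq => ->; rewrite ltirr.
have lt2F u v : lt u v -> lt v u -> False by move=> luv /(lttr _ _ _ luv); rewrite ltirr.
split; first split.
- by move=> u v luv; rewrite -lt_e ?luv ?lt_neq.
- move=> u v euv; have uv : u != v by apply: contraTneq euv => ->; rewrite eirr.
  move: euv; rewrite -lt_e //.
  by case luv: (lt u v); case lvu: (lt v u) => //; case: (lt2F u v).
move=> u v luv; apply/negP => /(connect_transitive_rel lttr) /orP[/eqP vu|/(lt2F u v luv)//].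
by move: luv; rewrite vu ltirr.
Qed.

Lemma acyclic_orientation_P3 e O : acyclic_orientation e O ->
  forall p u, p != [::] -> path O u p -> ~~ e u (last u p) ->
  exists a b c, [/\ O a b, O b c & ~~ e a c].
Proof.
case=> Oor Oacyc; elim=> [|x p IH] u // _ /=.
case/andP=> Oux; case: p IH => [|y p] IH pp /=; first by rewrite (proj1 Oor).
move=> nE; have [euy|neuy] := boolP (e u y); last first.
  by exists u, x, y; split=> //; case/andP: pp.
have Ouy : O u y.
  case/orP: (orientation_total Oor euy) => // Oyu; case/andP: pp => Oxy _.
  by have := Oacyc _ _ Oyu; rewrite (connect_trans (connect1 Oux) (connect1 Oxy)).
by apply: (IH u) => //=; rewrite Ouy; case/andP: pp.
Qed.

Lemma no_P3_transitive_orientation e O : symmetric e -> acyclic_orientation e O ->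
  (forall a b c, O a b -> O b c -> ~~ e a c -> False) -> transitive_orientation e O.
Proof.
move=> esym Oac noP3; split=> // u v uv.
have noPath x y : x != y -> ~~ e x y -> ~~ connect O x y.
  move=> xy nexy; apply/negP => /connectP[p pp yE].
  have p_nil : p != [::] by apply: contraNneq xy => p_nil; rewrite yE p_nil.
  have [|a [b [c [Oab Obc nac]]]] := acyclic_orientation_P3 Oac p_nil pp.
    by rewrite -yE.
  exact: noP3 Oab Obc nac.
have [euv|neuv] := boolP (e u v).
  rewrite /induced_lt uv eq_sym uv /=.
  by case/orP: (orientation_total (proj1 Oac) euv) => /connect1->; rewrite ?orbT.
rewrite /induced_lt uv eq_sym uv /= (negbTE (noPath u v _ _)) //.
by rewrite (negbTE (noPath v u _ _)) // 1?eq_sym // esym.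
Qed.

Lemma transitive_orientation_trans e O : transitive_orientation e O -> transitive O.
Proof.
case=> -[[Oe Oone] Oacyc] Ocomp y x z Oxy Oyz.
have Oxz : connect O x z := connect_trans (connect1 Oxy) (connect1 Oyz).
have xz : x != z by apply: contraTneq Oyz => <-; exact: orientation_asym (conj Oe Oone) _ _ Oxy.
have exz : e x z by rewrite -Ocomp // /induced_lt xz Oxz.
case/orP: (orientation_total (conj Oe Oone) exz) => // Ozx.
by have := Oacyc _ _ Ozx; rewrite Oxz.
Qed.
End Orientations.

Theorem theorem3p5 (V : finType) (e : rel V) :
  simple_graph e -> connected e -> comparability_graph e ->
  forall O : rel V, acyclic_orientation e O ->
    ((forall O' : rel V, acyclic_orientation e O' ->
        num_linext (induced_lt O') <= num_linext (induced_lt O))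
     <-> transitive_orientation e O).
Proof.
move=> [esym eirr] _ [lt [[ltirr lttr] lt_e]] O Oac.
have ltac := porder_acyclic_orientation eirr (conj ltirr lttr) lt_e.
have lt_sub_e : subrel lt e by case: ltac => -[].
have nlinextO' O' : acyclic_orientation e O' -> num_linext (induced_lt O') = nlinext O' setT.
  by case=> O'or _; apply/num_linext_nlinext/(orientation_irr eirr O'or).
split=> [Omax | Otr O' O'ac].
  apply: no_P3_transitive_orientation => // a b c Oab Obc nEac.
  have := nlinext_lt_order (orientation_total (proj1 Oac)) ltirr lttr lt_sub_e
    esym (orientation_asym (proj1 Oac)) (in_setT a) (in_setT b) (in_setT c) Oab Obc nEac.
  by rewrite -!nlinextO' // ltnNge Omax.
rewrite !nlinextO' //; apply: leq_trans (_ : nlinext lt setT <= _).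
  exact: nlinext_le_order (orientation_total (proj1 O'ac)) ltirr lttr lt_sub_e _.
apply: nlinext_le_order (orientation_total (proj1 ltac)) _ _ (proj1 (proj1 Oac)) _.
  exact: orientation_irr eirr (proj1 Oac).
exact: transitive_orientation_trans Otr.
Qed.
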